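(* Let $d \geq 2$ and let $\varGamma$ be a lattice in $\mathbb{R}^d$. The map $\eta\colon \operatorname{SOS}(\varGamma)\to\mathbb{R}^\bullet/\mathbb{Q}^\bullet$, $R\mapsto[\alpha]$, where $\alpha$ is any element of $\operatorname{scal}_\varGamma(R)$ and $[\alpha]$ denotes its class in $\mathbb{R}^\bullet/\mathbb{Q}^\bullet$, is a group homomorphism with kernel $\operatorname{SOC}(\varGamma)$.
   Context: A lattice in $\mathbb{R}^d$ is a subgroup of the form $\mathbb{Z}b_1\oplus\cdots\oplus\mathbb{Z}b_d$ where $\{b_1,\dots,b_d\}$ is a basis of $\mathbb{R}^d$. Two lattices $\varGamma,\varGamma'$ are commensurate, written $\varGamma\sim\varGamma'$, if $\varGamma\cap\varGamma'$ has finite index both in $\varGamma$ and in $\varGamma'$. $\operatorname{SOC}(\varGamma)=\{R\in\operatorname{SO}(d):\varGamma\sim R\varGamma\}$ (coincidence rotations) and $\operatorname{SOS}(\varGamma)=\{R\in\operatorname{SO}(d):\varGamma\sim\alpha R\varGamma\text{ for some }\alpha>0\}$ (similarity rotations); both are subgroups of $\operatorname{SO}(d)$. For $R\in\operatorname{SO}(d)$, $\operatorname{scal}_\varGamma(R)=\{\alpha\in\mathbb{R}:\varGamma\sim\alpha R\varGamma\}$, which is nonempty for $R\in\operatorname{SOS}(\varGamma)$, and any two of its elements have rational ratio, so $\eta$ is well defined. $\mathbb{R}^\bullet$ and $\mathbb{Q}^\bullet$ denote the multiplicative groups of nonzero real and nonzero rational numbers. *)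

From HB Require Import structures.
From mathcomp Require Import all_boot all_order all_algebra.
From mathcomp Require Import reals.
Set Implicit Arguments.
Unset Strict Implicit.
Unset Printing Implicit Defensive.
Import Order.TTheory GRing.Theory Num.Theory.
Local Open Scope ring_scope.

Section Defs.
Variables (R : realType) (d : nat).

Definition vset := 'cV[R]_d -> Prop.

Definition is_lattice (L : vset) : Prop :=
  exists B : 'M[R]_d, B \in unitmx /\
    forall v, L v <-> exists z : 'cV[int]_d, v = B *m map_mx (fun k : int => k%:~R) z.

Definition setI_v (A B : vset) : vset := fun v => A v /\ B v.

Definition finite_index (H G : vset) : Prop :=
  exists s : seq 'cV[R]_d, (forall r, r \in s -> G r) /\
    forall g, G g -> exists2 r, r \in s & H (g - r).

Definition commensurate (L L' : vset) : Prop :=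
  finite_index (setI_v L L') L /\ finite_index (setI_v L L') L'.

Definition is_SO (Q : 'M[R]_d) : Prop := Q *m Q^T = 1%:M /\ \det Q = 1.

Definition scaled_rot (a : R) (Q : 'M[R]_d) (L : vset) : vset :=
  fun v => exists2 x, L x & v = a *: (Q *m x).

Definition SOC (L : vset) (Q : 'M[R]_d) : Prop :=
  is_SO Q /\ commensurate L (scaled_rot 1 Q L).

Definition SOS (L : vset) (Q : 'M[R]_d) : Prop :=
  is_SO Q /\ exists a : R, 0 < a /\ commensurate L (scaled_rot a Q L).

Definition scal (L : vset) (Q : 'M[R]_d) (a : R) : Prop :=
  commensurate L (scaled_rot a Q L).

End Defs.

(* equality of classes in R^•/Q^• : a = q b for some nonzero rational q *)
Definition rat_equiv (R : realType) (a b : R) : Prop :=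
  exists q : rat, q != 0 /\ a = ratr q * b.

From HB Require Import structures.
From mathcomp Require Import all_boot all_order all_algebra.
From mathcomp Require Import reals.
From Stdlib Require Import ClassicalEpsilon FunctionalExtensionality PropExtensionality Classical.
Import Order.TTheory GRing.Theory Num.Theory.
Local Open Scope ring_scope.
Set Implicit Arguments.
Unset Strict Implicit.

(* Everything rests on one fact: if [a L] and [b L] are commensurate then [a/b]
   is rational.  Indeed [b L / (a L ∩ b L)] is a finite group, so some multiple
   [n b x] of a basis vector [x] of [L] lies in [a L], i.e. [n b x = a B z];
   reading off the coordinate of [x] gives [n b = a k].  With [M] invertible,
   [L ~ a M L] and [L ~ b M L] give [a M L ~ b M L], hence [a L ~ b L].  This
   yields that [eta] is well defined, and also multiplicative, since
   [L ~ b S L] implies [a Q L ~ a b Q S L].  Finally [L ~ q L] for rational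
   [q != 0], because [k L] has finite index in [L] for integers [k != 0]. *)

Section Commensurability.
Variables (R : realType) (d : nat).
Local Notation V := 'cV[R]_d.
Local Notation setI_v := (@setI_v R d).
Local Notation finite_index := (@finite_index R d).
Local Notation commensurate := (@commensurate R d).

Definition subgroup (A : V -> Prop) := A 0 /\ forall x y, A x -> A y -> A (x - y).

Definition mx_image (M : 'M[R]_d) (A : V -> Prop) : V -> Prop :=
  fun v => exists2 x, A x & v = M *m x.

Lemma vset_ext (A B : V -> Prop) : (forall v, A v <-> B v) -> A = B.
Proof.
move=> AB; apply: functional_extensionality => v.
exact/propositional_extensionality/AB.
Qed.

Lemma setI_vC A B : setI_v A B = setI_v B A.
Proof. by apply: vset_ext => v; split=> -[]. Qed.

Lemma mx_imageM M N A : mx_image M (mx_image N A) = mx_image (M *m N) A.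
Proof.
apply: vset_ext => v; split.
  by move=> [_ [x Ax ->] ->]; exists x; rewrite ?mulmxA.
by move=> [x Ax ->]; exists (N *m x); [exists x | rewrite mulmxA].
Qed.

Lemma mx_image1 A : mx_image 1%:M A = A.
Proof.
apply: vset_ext => v; split; first by move=> [x Ax ->]; rewrite mul1mx.
by move=> Av; exists v; rewrite ?mul1mx.
Qed.

Lemma scaled_rotE a Q L : scaled_rot a Q L = mx_image (a *: Q) L.
Proof. by apply: vset_ext => v; split=> -[x Lx ->]; exists x; rewrite ?scalemxAl. Qed.

Lemma subgroupI A B : subgroup A -> subgroup B -> subgroup (setI_v A B).
Proof. by move=> [A0 AB] [B0 BB]; split=> [|x y [? ?] [? ?]]; split; auto. Qed.

Lemma subgroup_image M A : subgroup A -> subgroup (mx_image M A).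
Proof.
move=> [A0 AB]; split; first by exists 0; rewrite ?mulmx0.
by move=> _ _ [x Ax ->] [y Ay ->]; exists (x - y); rewrite ?mulmxBr; auto.
Qed.

Lemma subgroup_mulrn A x m : subgroup A -> A x -> A (x *+ m).
Proof.
move=> [A0 AB] Ax; elim: m => [|m IH]; first by rewrite mulr0n.
have -> : x *+ m.+1 = x *+ m - (0 - x) by rewrite mulrS sub0r opprK addrC.
by auto.
Qed.

Lemma lattice_subgroup L : is_lattice L -> subgroup L.
Proof.
move=> [B [_ LB]]; split.
  apply/LB; exists 0; rewrite [map_mx _ _](_ : _ = 0) ?mulmx0 //.
  by apply/matrixP => i j; rewrite !mxE.
move=> _ _ /LB [x ->] /LB [y ->]; apply/LB; exists (x - y).
by rewrite -mulmxBr; congr (B *m _); apply/matrixP => i j; rewrite !mxE intrB.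
Qed.

Lemma commensurate_sym A B : commensurate A B -> commensurate B A.
Proof. by move=> [AB BA]; split; rewrite setI_vC. Qed.

Lemma finite_index_image M A B : finite_index (setI_v A B) A ->
  finite_index (setI_v (mx_image M A) (mx_image M B)) (mx_image M A).
Proof.
move=> [s [sA covA]]; exists (map (mulmx M) s); split.
  by move=> _ /mapP [r rs ->]; exists r; auto.
move=> _ [x Ax ->]; have [r rs [Axr Bxr]] := covA x Ax.
exists (M *m r); first exact: map_f.
by rewrite -mulmxBr; split; exists (x - r).
Qed.

Lemma commensurate_image M A B :
  commensurate A B -> commensurate (mx_image M A) (mx_image M B).
Proof.
move=> [AB BA]; split; first exact: finite_index_image.
by rewrite setI_vC; apply: finite_index_image; rewrite setI_vC.
Qed.

(* A finite family of coset representatives can always be moved into [G]: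
   a coset [r + H] meeting [G] in [x] is also [x + H]. *)
Lemma cover_in_subgroup (G H : V -> Prop) (s : seq V) : subgroup H ->
  exists2 s' : seq V, (forall r, r \in s' -> G r) &
    forall g, G g -> (exists2 r, r \in s & H (g - r)) -> exists2 r, r \in s' & H (g - r).
Proof.
move=> [_ HB]; elim: s => [|r s [s' s'G cov]]; first by exists [::] => // g _ [].
have [[x Gx Hxr] | noG] := classic (exists2 x, G x & H (x - r)).
  exists (x :: s'); first by move=> y; rewrite inE => /orP [/eqP -> | /s'G].
  move=> g Gg [r'] /[!inE] /orP [/eqP -> Hgr | r's Hgr'].
    exists x; first exact: mem_head.
    have -> : g - x = (g - r) - (x - r) by rewrite opprB addrA subrK.
    exact: HB.
  have [|y ys' Hgy] := cov g Gg; first by exists r'.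
  by exists y; rewrite // inE ys' orbT.
exists s' => // g Gg [r'] /[!inE] /orP [/eqP -> Hgr | r's Hgr'].
  by exfalso; apply: noG; exists g.
by apply: cov => //; exists r'.
Qed.

Lemma finite_index_cover (G H : V -> Prop) (s : seq V) :
  subgroup G -> subgroup H -> (forall g, G g -> exists2 r, r \in s & H (g - r)) ->
  finite_index (setI_v G H) G.
Proof.
move=> [_ GB] gH covs; have [s' s'G cov] := cover_in_subgroup G s gH.
exists s'; split=> // g Gg; have [r rs' Hgr] := cov g Gg (covs g Gg).
by exists r => //; split; auto.
Qed.

Lemma finite_index_trans A B C : subgroup A -> subgroup C ->
  finite_index (setI_v A B) A -> finite_index (setI_v B C) B ->
  finite_index (setI_v A C) A.
Proof.
move=> gA gC [s1 [_ cov1]] [s2 [_ cov2]].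
apply: (finite_index_cover (s := [seq r1 + r2 | r1 <- s1, r2 <- s2])) => // a Aa.
have [r1 r1s [_ Bar1]] := cov1 a Aa; have [r2 r2s [_ Car12]] := cov2 _ Bar1.
exists (r1 + r2); first by apply/allpairsP; exists (r1, r2).
by rewrite opprD addrA.
Qed.

Lemma commensurate_trans A B C : subgroup A -> subgroup C ->
  commensurate A B -> commensurate B C -> commensurate A C.
Proof.
move=> gA gC [AB BA] [BC CB]; split; first exact: finite_index_trans BC.
by rewrite setI_vC; apply: (finite_index_trans (B := B) gC gA); rewrite setI_vC.
Qed.

Lemma not_injective_into_seq (T : eqType) (s : seq T) (f : nat -> T) :
  (forall m, f m \in s) -> exists i j, (i < j)%N /\ f i = f j.
Proof.
move=> fs; pose t := map f (iota 0 (size s).+1).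
have /negP : ~ uniq t.
  move=> /uniq_leq_size le_ts.
  have /le_ts : {subset t <= s} by move=> _ /mapP [m _ ->].
  by rewrite size_map size_iota ltnn.
case/(uniqPn (f 0)) => i [j [ij]]; rewrite size_map size_iota => jt.
rewrite !(nth_map 0%N) ?size_iota ?(ltn_trans ij) // !nth_iota ?(ltn_trans ij) //.
by exists i, j.
Qed.

Lemma finite_index_mulrn (H G : V -> Prop) x : subgroup H -> subgroup G ->
  finite_index H G -> G x -> exists2 n, (0 < n)%N & H (x *+ n).
Proof.
move=> [_ HB] gG [s [_ cov]] Gx.
have cov_m m : exists r, r \in s /\ H (x *+ m - r).
  by have [r rs Hr] := cov _ (subgroup_mulrn m gG Gx); exists r.
pose f m := proj1_sig (constructive_indefinite_description _ (cov_m m)).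
have fP m : f m \in s /\ H (x *+ m - f m) := proj2_sig (constructive_indefinite_description _ (cov_m m)).
have [i [j [ij fij]]] := not_injective_into_seq (fun m => proj1 (fP m)).
exists (j - i)%N; first by rewrite subn_gt0.
have -> : x *+ (j - i) = (x *+ j - f j) - (x *+ i - f i).
  by rewrite fij opprB addrA subrK mulrnBr // ltnW.
by apply: HB; [case: (fP j) | case: (fP i)].
Qed.

Lemma lattice_scaled_multiple L a b : (0 < d)%N -> is_lattice L ->
  finite_index (setI_v (mx_image a%:M L) (mx_image b%:M L)) (mx_image b%:M L) ->
  exists n : nat, exists k : int, (0 < n)%N /\ b *+ n = a * k%:~R.
Proof.
move=> d_gt0 latL fi; have gL := lattice_subgroup latL.
have [B [unitB LB]] := latL.
pose i0 := Ordinal d_gt0; pose e : V := delta_mx i0 0.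
have Le : L (B *m e).
  by apply/LB; exists (delta_mx i0 0); congr (B *m _); apply/matrixP => i j; rewrite !mxE; case: (_ && _).
have gH : subgroup (setI_v (mx_image a%:M L) (mx_image b%:M L)).
  by apply: subgroupI; apply: subgroup_image.
have bLe : mx_image b%:M L (b%:M *m (B *m e)) by exists (B *m e).
have [n n_gt0 [[_ /LB [z ->] aBz] _]] := finite_index_mulrn gH (subgroup_image _ gL) fi bLe.
exists n, (z i0 0); split=> //.
rewrite !mul_scalar_mx scalerMnl !scalemxAr in aBz.
move/(congr1 (mulmx (invmx B))): aBz; rewrite !mulKmx // => /matrixP /(_ i0 0).
by rewrite !mxE !eqxx mulr1.
Qed.

Lemma commensurate_scaled_rat_equiv L a b : (0 < d)%N -> is_lattice L ->
  commensurate (mx_image a%:M L) (mx_image b%:M L) -> rat_equiv a b.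
Proof.
move=> d_gt0 latL [ab ba]; rewrite setI_vC in ab.
have [n [k [n_gt0 bn]]] := lattice_scaled_multiple d_gt0 latL ba.
have [n' [k' [n'_gt0 an']]] := lattice_scaled_multiple d_gt0 latL ab.
have [k0 | k_neq0] := eqVneq k 0.
  move: bn; rewrite k0 mulr0 => /eqP; rewrite mulrn_eq0 (negPf (lt0n_neq0 n_gt0)) => /eqP b0.
  move: an'; rewrite b0 mul0r => /eqP; rewrite mulrn_eq0 (negPf (lt0n_neq0 n'_gt0)) => /eqP ->.
  by exists 1; rewrite oner_neq0 rmorph1 mul1r.
have kR : (k%:~R : R) != 0 by rewrite intr_eq0.
exists (n%:R / k%:~R); split; first by rewrite mulf_neq0 ?invr_eq0 ?intr_eq0 ?pnatr_eq0 -?lt0n.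
rewrite rmorphM /= fmorphV ratr_nat rmorph_int; apply: (mulIf kR).
by rewrite mulrAC divfK // -bn mulr_natl.
Qed.

Lemma scaled_images_rat_equiv L M a b : (0 < d)%N -> is_lattice L -> M \in unitmx ->
  commensurate L (mx_image (a *: M) L) -> commensurate L (mx_image (b *: M) L) ->
  rat_equiv a b.
Proof.
move=> d_gt0 latL unitM La Lb; have gL := lattice_subgroup latL.
have ab : commensurate (mx_image (a *: M) L) (mx_image (b *: M) L).
  exact: commensurate_trans (subgroup_image _ gL) (subgroup_image _ gL) (commensurate_sym La) Lb.
apply: (commensurate_scaled_rat_equiv d_gt0 latL).
by have := commensurate_image (invmx M) ab; rewrite !mx_imageM -!scalemxAr mulVmx // !scalemx1.
Qed.

Lemma commensurate_lattice_int L (k : int) : is_lattice L -> k != 0 ->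
  commensurate L (mx_image (k%:~R)%:M L).
Proof.
move=> latL k_neq0; have gL := lattice_subgroup latL.
have [B [_ LB]] := latL.
have kL_sub x : mx_image (k%:~R)%:M L x -> L x.
  move=> [_ /LB [z ->] ->]; apply/LB; exists (k *: z).
  by rewrite mul_scalar_mx scalemxAr; congr (B *m _); apply/matrixP => i j; rewrite !mxE intrM.
split; last first.
  exists [:: 0]; split=> [r /[!inE] /eqP -> | g kLg]; first by case: (subgroup_image (k%:~R)%:M gL).
  by exists 0; rewrite ?inE // subr0; split; auto.
(* the residues of the coordinates modulo [k] label the cosets of [k L] *)
pose K := `|k|%N.
pose res (w : 'cV['I_K]_d) : V := B *m map_mx (fun x : 'I_K => (x : nat)%:R) w.
apply: (finite_index_cover (s := map res (enum 'cV['I_K]_d))) => //.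
  exact: subgroup_image.
move=> _ /LB [z ->].
have res_lt i j : (`|(z i j %% k)%Z|%N < K)%N.
  by rewrite -ltz_nat !abszE ger0_norm ?modz_ge0 // ltz_mod.
exists (res (\matrix_(i, j) Ordinal (res_lt i j))); first by rewrite map_f ?mem_enum.
exists (B *m map_mx (intmul 1) (\matrix_(i, j) (z i j %/ k)%Z)); first by apply/LB; eexists.
rewrite -mulmxBr mul_scalar_mx scalemxAr; congr (B *m _); apply/matrixP => i j.
rewrite !mxE /= natr_absz ger0_norm ?modz_ge0 //.
by rewrite {1}(divz_eq (z i j) k) intrD intrM mulrC addrK.
Qed.

Lemma commensurate_lattice_rat L (q : rat) : is_lattice L -> q != 0 ->
  commensurate L (mx_image (ratr q : R)%:M L).
Proof.
move=> latL q_neq0; have gL := lattice_subgroup latL.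
have dR : ((denq q)%:~R : R) != 0 by rewrite intr_eq0 denq_neq0.
have Ln : commensurate L (mx_image ((numq q)%:~R)%:M L).
  by apply: commensurate_lattice_int; rewrite // numq_eq0.
have Ld := commensurate_image ((denq q)%:~R^-1)%:M
  (commensurate_lattice_int latL (denq_neq0 q)).
rewrite mx_imageM -scalar_mxM mulVf // mx_image1 in Ld.
have := commensurate_image ((numq q)%:~R)%:M (commensurate_sym Ld).
rewrite mx_imageM -scalar_mxM.
exact: commensurate_trans (subgroup_image _ gL) Ln.
Qed.

Lemma SO_unitmx (Q : 'M[R]_d) : is_SO Q -> Q \in unitmx.
Proof. by move=> [_ detQ]; rewrite unitmxE detQ unitr1. Qed.

End Commensurability.

Unset Implicit Arguments.
Set Strict Implicit.

Theorem mainTheorem2 (R : realType) (d : nat) (L : 'cV[R]_d -> Prop) :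
  (2 <= d)%N -> is_lattice L ->
  (forall Q : 'M[R]_d, SOS L Q ->
     forall a b : R, scal L Q a -> scal L Q b -> rat_equiv a b) /\
  (forall Q S : 'M[R]_d, SOS L Q -> SOS L S ->
     forall a b c : R, scal L Q a -> scal L S b -> scal L (Q *m S) c ->
       rat_equiv c (a * b)) /\
  (forall Q : 'M[R]_d,
     SOC L Q <-> (SOS L Q /\ forall a : R, scal L Q a -> rat_equiv a 1)).
Proof.
move=> d_ge2 latL; have d_gt0 : (0 < d)%N by apply: leq_trans d_ge2.
have gL := lattice_subgroup latL; have gLM M := subgroup_image M gL.
rewrite /SOC /SOS /scal; split; last split.
- move=> Q [SOQ _] a b; rewrite !scaled_rotE.
  exact: scaled_images_rat_equiv d_gt0 latL (SO_unitmx SOQ).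
- move=> Q S [SOQ _] [SOS _] a b c; rewrite !scaled_rotE => La Lb Lc.
  have := commensurate_image (a *: Q) Lb.
  rewrite mx_imageM -scalemxAl -scalemxAr scalerA => aLb.
  have uQS : Q *m S \in unitmx by rewrite unitmx_mul !SO_unitmx.
  exact: scaled_images_rat_equiv d_gt0 latL uQS Lc (commensurate_trans gL (gLM _) La aLb).
- move=> Q; rewrite !scaled_rotE; split.
    move=> [SOQ L1]; split; first by split=> //; exists 1; rewrite scaled_rotE ltr01.
    move=> a; rewrite scaled_rotE => La.
    exact: scaled_images_rat_equiv d_gt0 latL (SO_unitmx SOQ) La L1.
  move=> [[SOQ [a [_ La]]] eta1]; split=> //.
  have [q [q_neq0 aq]] := eta1 a La; rewrite mulr1 in aq.
  rewrite scaled_rotE aq in La.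
  have := commensurate_image (ratr q *: Q) (commensurate_lattice_rat latL (invr_neq0 q_neq0)).
  rewrite mx_imageM mul_mx_scalar scalerA fmorphV mulVf ?fmorph_eq0 // => qLQ.
  exact: commensurate_trans gL (gLM _) La qLQ.
Qed.
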